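(* Let $f=f^{(L)}\circ\cdots\circ f^{(1)}$ with $f^{(\ell)}(\mathbf{u})=\sigma(\mathbf{W}^{(\ell)}\mathbf{u}+\mathbf{b}^{(\ell)})$, $\mathbf{W}^{(\ell)}\in\mathbb{R}^{D^{(\ell+1)}\times D^{(\ell)}}$, $\mathbf{b}^{(\ell)}\in\mathbb{R}^{D^{(\ell+1)}}$, where $\sigma$ is continuous, affine on $(-\infty,0]$ and on $[0,\infty)$, applied coordinatewise. Let $\mathbf{V}\in\mathbb{R}^{P\times D^{(1)}}$ have rows $\mathbf{v}_1^T,\dots,\mathbf{v}_P^T$ and let $R$ be their convex hull. Define recursively $\mathbf{V}^{(1)}=\mathbf{V}$ and, for $\ell=1,\dots,L$: $\mathbf{H}^{(\ell)}=\mathbf{V}^{(\ell)}(\mathbf{W}^{(\ell)})^T+\mathbf{1}_P(\mathbf{b}^{(\ell)})^T$; $s^{(\ell)}_k=1$ if $\#\{i:\mathbf{H}^{(\ell)}_{i,k}>0\}\ge P/2$ and $s^{(\ell)}_k=-1$ otherwise; $c^{(\ell)}_k=s^{(\ell)}_k\max_{p}\max(0,-\mathbf{H}^{(\ell)}_{p,k}s^{(\ell)}_k)$; and $\mathbf{V}^{(\ell+1)}=\sigma(\mathbf{V}^{(\ell)}(\mathbf{W}^{(\ell)})^T+\mathbf{1}_P(\mathbf{b}^{(\ell)}+\mathbf{c}^{(\ell)})^T)$. Let $\tilde f=\tilde f^{(L)}\circ\cdots\circ\tilde f^{(1)}$ with $\tilde f^{(\ell)}(\mathbf{u})=\sigma(\mathbf{W}^{(\ell)}\mathbf{u}+\mathbf{b}^{(\ell)}+\mathbf{c}^{(\ell)})$.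 Then, for arbitrary weights $\mathbf{W}^{(\ell)}$ and biases $\mathbf{b}^{(\ell)}$, $\tilde f$ is affine on $R$.
   Context: $\mathbf{1}_P$ is the all-ones vector of length $P$; $\sigma$ applied to a matrix acts entrywise. The network $\tilde f$ is the ''POLICEd'' network obtained by shifting each layer's bias by $\mathbf{c}^{(\ell)}$, computed from the vertices propagated through the already-shifted previous layers. *)

From HB Require Import structures.
From mathcomp Require Import all_boot all_order all_algebra.
From mathcomp Require Import all_classical all_reals all_analysis.
Set Implicit Arguments. Unset Strict Implicit. Unset Printing Implicit Defensive.
Import Order.TTheory GRing.Theory Num.Theory numFieldTopology.Exports numFieldNormedType.Exports.
Local Open Scope ring_scope.

(* Layers are 0-indexed: layer n (paper's l = n+1) maps R^(D n) -> R^(D n.+1).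
   Vectors are column vectors; V : 'M_(P, D 0) has the vertices as rows. *)
Section POLICE.
Variable R : realType.
Variable sigma : R -> R.
Variable P : nat.
Variable D : nat -> nat.
Variable W : forall n, 'M[R]_(D n.+1, D n).
Variable b : forall n, 'cV[R]_(D n.+1).

Definition Hmat n (Vn : 'M[R]_(P, D n)) : 'M[R]_(P, D n.+1) :=
  \matrix_(i < P, k < D n.+1) ((Vn *m (W n)^T) i k + b n k ord0).

Definition sgn_vec n (H : 'M[R]_(P, D n.+1)) : 'cV[R]_(D n.+1) :=
  \col_(k < D n.+1)
    (if (P <= 2 * #|[set i : 'I_P | (H i k > 0)%R]|)%N then 1 else -1).

Definition cvec n (H : 'M[R]_(P, D n.+1)) : 'cV[R]_(D n.+1) :=
  \col_(k < D n.+1)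
    (sgn_vec H k ord0 *
       \big[Num.max/0]_(p < P) Num.max 0 (- H p k * sgn_vec H k ord0)).

Fixpoint Vprop (V : 'M[R]_(P, D 0)) (n : nat) : 'M[R]_(P, D n) :=
  match n return 'M[R]_(P, D n) with
  | 0 => V
  | n'.+1 =>
      let H := Hmat (Vprop V n') in
      map_mx sigma (\matrix_(i < P, k < D n'.+1) (H i k + cvec H k ord0))
  end.

Definition shift (V : 'M[R]_(P, D 0)) n : 'cV[R]_(D n.+1) :=
  cvec (Hmat (Vprop V n)).

Fixpoint net (c : forall n, 'cV[R]_(D n.+1)) (n : nat) : 'cV[R]_(D 0) -> 'cV[R]_(D n) :=
  match n return 'cV[R]_(D 0) -> 'cV[R]_(D n) with
  | 0 => fun u => u
  | n'.+1 => fun u => map_mx sigma (W n' *m net c n' u + b n' + c n')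
  end.

Definition policed (V : 'M[R]_(P, D 0)) L := net (shift V) L.
End POLICE.

Definition in_rows_hull (R : realType) (P m : nat) (V : 'M[R]_(P, m)) (x : 'cV[R]_m) :=
  exists lam : 'I_P -> R, (forall i, 0 <= lam i) /\ \sum_(i < P) lam i = 1 /\
    x = \sum_(i < P) lam i *: (row i V)^T.

Definition affine_on (R : realType) (m k : nat) (S : 'cV[R]_m -> Prop)
    (f : 'cV[R]_m -> 'cV[R]_k) :=
  exists (A : 'M[R]_(k, m)) (a : 'cV[R]_k), forall x, S x -> f x = A *m x + a.

Definition two_piece_affine (R : realType) (sigma : R -> R) :=
  continuous sigma /\
  (exists a1 c1 : R, forall x, x <= 0 -> sigma x = a1 * x + c1) /\
  (exists a2 c2 : R, forall x, 0 <= x -> sigma x = a2 * x + c2).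

From Pilot Require Import Defs.
From HB Require Import structures.
From mathcomp Require Import all_boot all_order all_algebra.
From mathcomp Require Import all_classical all_reals all_analysis.
From mathcomp Require Import lra.
Import Order.TTheory GRing.Theory Num.Theory numFieldTopology.Exports numFieldNormedType.Exports.
Local Open Scope ring_scope.

(* For a sign pattern s in {+,-}^m, the closed orthant of s is
   the set of vectors z with z_k >= 0 where s_k = + and z_k <= 0 where s_k = -.
   Orthants are convex cones, and since sigma is affine on each half-line, the
   coordinatewise map sigma is affine on every closed orthant.
   The POLICE shift c is chosen so that, at every layer, the shifted
   pre-activations of all propagated vertices lie in one common orthant (the
   one whose sign says "at least half of the vertices are positive").
   If the first n layers are affine on the hull R of the vertices, then so is
   the pre-activation of layer n+1; it therefore maps R into the convex hull
   of the vertex pre-activations, which lies in that orthant, and layer n+1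
   composed with the first n layers is again affine on R. *)

Section Orthants.
Context {R : realType}.

Definition in_orthant {m : nat} (s : 'I_m -> bool) (z : 'cV[R]_m) :=
  forall k, if s k then 0 <= z k ord0 else z k ord0 <= 0.

Lemma in_orthant_conic (P m : nat) (s : 'I_m -> bool) (lam : 'I_P -> R)
    (z : 'I_P -> 'cV[R]_m) :
  (forall i, 0 <= lam i) -> (forall i, in_orthant s (z i)) ->
  in_orthant s (\sum_(i < P) lam i *: z i).
Proof.
move=> lam_ge0 zs k; rewrite summxE.
have := fun i => zs i k; case: (s k) => zk.
- by apply: sumr_ge0 => i _; rewrite mxE mulr_ge0.
- rewrite -oppr_ge0 -sumrN; apply: sumr_ge0 => i _.
  by rewrite mxE -mulrN mulr_ge0 // oppr_ge0.
Qed.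

(* A two-piece affine activation acts affinely on every closed orthant:
   on coordinate k it is the affine piece selected by the sign s_k. *)
Lemma two_piece_affine_on_orthant {sigma : R -> R} {m : nat} (s : 'I_m -> bool) :
  two_piece_affine sigma ->
  exists (G : 'M[R]_m) (g : 'cV[R]_m),
    forall z, in_orthant s z -> map_mx sigma z = G *m z + g.
Proof.
case=> _ [[a1 [c1 neg_piece]] [a2 [c2 pos_piece]]].
exists (diag_mx (\row_k (if s k then a2 else a1))),
       (\col_k (if s k then c2 else c1)) => z zs.
apply/matrixP => k j; rewrite (ord1 j) mxE mul_diag_mx !mxE.
by have := zs k; case: (s k) => zk; [rewrite pos_piece | rewrite neg_piece].
Qed.

Lemma affine_convex_comb (P m k : nat) (A : 'M[R]_(k, m)) (a : 'cV[R]_k)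
    (lam : 'I_P -> R) (x : 'I_P -> 'cV[R]_m) :
  \sum_(i < P) lam i = 1 ->
  A *m (\sum_(i < P) lam i *: x i) + a = \sum_(i < P) lam i *: (A *m x i + a).
Proof.
move=> lam1; under [RHS]eq_bigr do rewrite scalerDr scalemxAr.
by rewrite big_split /= -scaler_suml lam1 scale1r mulmx_sumr.
Qed.

Lemma vertex_in_hull (P m : nat) (V : 'M[R]_(P, m)) (i : 'I_P) :
  in_rows_hull V (row i V)^T.
Proof.
exists (fun j => (j == i)%:R); split; first by move=> j; rewrite ler0n.
split; first by rewrite (bigD1 i) //= eqxx big1 ?addr0 // => j /negbTE ->.
rewrite (bigD1 i) //= eqxx scale1r big1 ?addr0 // => j /negbTE ->.
by rewrite scale0r.
Qed.

Lemma affine_on_layer {sigma : R -> R} {P m p q : nat} {V : 'M[R]_(P, m)}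
    {f : 'cV[R]_m -> 'cV[R]_p} {M : 'M[R]_(q, p)} {e : 'cV[R]_q}
    (s : 'I_q -> bool) :
  two_piece_affine sigma -> affine_on (in_rows_hull V) f ->
  (forall i, in_orthant s (M *m f (row i V)^T + e)) ->
  affine_on (in_rows_hull V) (fun x => map_mx sigma (M *m f x + e)).
Proof.
move=> sigma_pw [A [a fE]] vertices_in.
have [G [g sigmaE]] := two_piece_affine_on_orthant s sigma_pw.
exists (G *m (M *m A)), (G *m (M *m a + e) + g) => x x_hull.
have [lam [lam_ge0 [lam1 xE]]] := x_hull.
have preE : M *m f x + e = \sum_(i < P) lam i *: (M *m f (row i V)^T + e).
  rewrite fE // xE mulmxDr mulmxA -addrA affine_convex_comb //.
  apply: eq_bigr => i _; rewrite fE; last exact: vertex_in_hull.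
  by rewrite mulmxDr mulmxA addrA.
rewrite (sigmaE (M *m f x + e)); last by rewrite preE; exact: in_orthant_conic.
by rewrite fE // !mulmxDr !mulmxA !addrA.
Qed.

End Orthants.

Section Police.
Variable R : realType.
Variable sigma : R -> R.
Variable P : nat.
Variable D : nat -> nat.
Variable W : forall n, 'M[R]_(D n.+1, D n).
Variable b : forall n, 'cV[R]_(D n.+1).

Local Notation policed_net V n := (Defs.net sigma W b (Defs.shift sigma W b V) n).

Lemma Hmat_row n (X : 'M[R]_(P, D n)) (i : 'I_P) :
  (row i (Hmat W b X))^T = W n *m (row i X)^T + b n.
Proof.
apply/matrixP => k j; rewrite (ord1 j) !mxE; congr (_ + _).
by apply: eq_bigr => l _; rewrite !mxE mulrC.
Qed.

Lemma Vprop_row (V : 'M[R]_(P, D 0)) n (i : 'I_P) :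
  (row i (Vprop sigma W b V n))^T = policed_net V n (row i V)^T.
Proof.
elim: n => [//|n IH] /=; rewrite -IH -Hmat_row.
by apply/matrixP => k j; rewrite (ord1 j) !mxE.
Qed.

Definition majority_sign {n} (H : 'M[R]_(P, D n.+1)) (k : 'I_(D n.+1)) : bool :=
  (P <= 2 * #|[set i : 'I_P | (H i k > 0)%R]|)%N.

(* The key property of the shift c: after adding c, every row of H lies in the
   orthant of the majority sign pattern, since c_k compensates the largest
   violation of the sign s_k among all rows. *)
Lemma shifted_rows_in_orthant n (H : 'M[R]_(P, D n.+1)) (i : 'I_P) :
  in_orthant (majority_sign H) ((row i H)^T + cvec H).
Proof.
move=> k; rewrite /cvec /sgn_vec /majority_sign !mxE.
have row_le_worst (t : R) :
    - H i k * t <= \big[Num.max/0]_(p < P) Num.max 0 (- H p k * t).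
  by apply: le_trans (le_bigmax 0 (fun p => Num.max 0 (- H p k * t)) i);
    rewrite le_max lexx orbT.
by case: (P <= _)%N; [have := row_le_worst 1 | have := row_le_worst (-1)]; lra.
Qed.

Lemma policed_affine_on_hull (V : 'M[R]_(P, D 0)) n :
  two_piece_affine sigma ->
  affine_on (in_rows_hull V) (policed_net V n).
Proof.
move=> sigma_pw; elim: n => [|n IH].
  by exists 1%:M, 0 => x _; rewrite mul1mx addr0.
have layerE x : policed_net V n.+1 x =
    map_mx sigma (W n *m policed_net V n x + (b n + Defs.shift sigma W b V n)).
  by rewrite /= addrA.
rewrite (funext layerE).
apply: (affine_on_layer (majority_sign (Hmat W b (Vprop sigma W b V n))))
  => // i.
by rewrite addrA -Vprop_row -Hmat_row; apply: shifted_rows_in_orthant.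
Qed.

End Police.

Theorem mainTheorem3 (R : realType) (sigma : R -> R) (P L : nat) (D : nat -> nat)
  (W : forall n, 'M[R]_(D n.+1, D n)) (b : forall n, 'cV[R]_(D n.+1))
  (V : 'M[R]_(P, D 0%N)) :
  two_piece_affine sigma ->
  affine_on (in_rows_hull V) (policed sigma W b V L).
Proof. exact: policed_affine_on_hull. Qed.
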